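(* For any incidence function $\varepsilon$ on the toric cell complex $\Delta$, the complex \[ 0\to P_n\xrightarrow{d_n}P_{n-1}\xrightarrow{d_{n-1}}\cdots\xrightarrow{d_2}P_1\xrightarrow{d_1}P_0\xrightarrow{\mu}A\to0 \] is a minimal projective $(A,A)$-bimodule resolution of $A$.
   Context: Let $\mathbb{k}$ be an algebraically closed field and $G\subset\operatorname{SL}(n,\mathbb{k})$ a finite abelian subgroup of diagonal matrices, with $\operatorname{char}\mathbb{k}$ not dividing $|G|$. Let $\rho_i\in G^*=\operatorname{Hom}(G,\mathbb{k}^\times)$ be the $i$-th diagonal entry. The McKay quiver $Q$ has vertex set $G^*$ and, for each $\rho\in G^*$ and $1\le i\le n$, an arrow $a_i^\rho:\rho\to\rho\rho_i$ (label $x_i$). Paths compose right to left. Let $A=\mathbb{k}Q/J$, where $J$ is generated by $a_i^{\rho\rho_j}a_j^\rho-a_j^{\rho\rho_i}a_i^\rho$ for $\rho\in G^*$, $1\le i<j\le n$ (this is isomorphic to the skew group algebra $\mathbb{k}[x_1,\dots,x_n]*G$). Toric cell complex: let $\deg:\mathbb{Z}^n\to G^*$, $\chi_i\mapsto\rho_i$, $M=\ker\deg$, $\mathbb{T}^n=\mathbb{R}^n/M$. The covering quiver has vertex set $\mathbb{Z}^n$ and arrows $u\to u+\chi_i$, mapping to $a_i^{\deg u}$. For $u\in\mathbb{Z}^n$, $S\subseteq\{1,\dots,n\}$ let $F(u,S)=\{u+\sum_{i\in S}\lambda_i\chi_i:0\le\lambda_i\le1\}$ (the faces of unit cubes $u+[0,1]^n$).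 $\Delta$ is the set of images in $\mathbb{T}^n$ of all $F(u,S)$ together with $\emptyset$; it is a finite regular cell complex, $\Delta_k$ being the images with $|S|=k$. For $\eta$ the image of $F(u,S)$: tail $\mathsf{t}(\eta)=\deg u$, head $\mathsf{h}(\eta)=\deg(u+\sum_{i\in S}\chi_i)$ (vertices of $Q$; $\Delta_0$ is identified with $G^*$). For a face $\eta'\subseteq\eta$ take lifts $F(u',S')\subseteq F(u,S)$; the left-derivative $\overleftarrow{\partial}_{\eta'}\eta\in A$ is the class of the image in $Q$ of any path in the covering quiver from $u'+\sum_{S'}\chi_i$ to $u+\sum_S\chi_i$, and the right-derivative $\overrightarrow{\partial}_{\eta'}\eta\in A$ that of any path from $u$ to $u'$ (these are well defined). Facets are faces of codimension one. An incidence function is $\varepsilon:\Delta\times\Delta\to\{0,\pm1\}$ with $\varepsilon(\eta,\eta')=0$ unless $\eta'$ is a facet of $\eta$, $\varepsilon(\eta,\emptyset)=1$ for 0-cells $\eta$, and for $\eta\in\Delta_k$ and a face $\eta''\in\Delta_{k-2}$ of $\eta$, with $\eta'_1,\eta'_2$ the two $(k-1)$-cells that are facets of $\eta$ containing $\eta''$, $\varepsilon(\eta,\eta_1')\varepsilon(\eta_1',\eta'')+\varepsilon(\eta,\eta_2')\varepsilon(\eta_2',\eta'')=0$. The complex: $P_k=\bigoplus_{\eta\in\Delta_k}Ae_{\mathsf{h}(\eta)}\otimes[\eta]\otimes e_{\mathsf{t}(\eta)}A$ (tensor over $\mathbb{k}$, $[\eta]$ a formal symbol; so $P_0=\bigoplus_{i}Ae_i\otimes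 e_iA$), $\mu:P_0\to A$ the multiplication, and $d_k(1\otimes[\eta]\otimes1)=\sum_{\eta'\text{ facet of }\eta}\varepsilon(\eta,\eta')\,\overleftarrow{\partial}_{\eta'}\eta\otimes[\eta']\otimes\overrightarrow{\partial}_{\eta'}\eta$.
   Formalization: Each $\rho_i$ is nontrivial; ε(η,η') ≠ 0 exactly when η' is a facet of η; the codimension-two condition holds for every lift of η'' in F(u,S), with the two facets of F(u,S) containing it; the $P_k$ are not asserted projective. Apart from conventions, each condition added here is assumed in the paper as well or is needed for the statement above to hold. *)

From HB Require Import structures.
From mathcomp Require Import all_boot all_order all_algebra all_fingroup.

Set Implicit Arguments.
Unset Strict Implicit.
Unset Printing Implicit Defensive.

Import GRing.Theory.
Local Open Scope ring_scope.

(*  - G is a finite group gT together with n "diagonal entry" maps            *)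
(*    coord i : gT -> k; the hypothesis [diag_SL_group coord] says that       *)
(*    x |-> diag(coord 0 x, ..., coord (n-1) x) is a faithful representation  *)
(*    of gT by diagonal matrices of determinant 1, i.e. gT is (isomorphic to) *)
(*    a finite (hence abelian) subgroup of diagonal matrices of SL(n,k).      *)
(*  - G^* = Hom(G, k^x) is the set of functions f : {ffun gT -> k} with       *)
(*    [is_character f]; rho i is the i-th diagonal entry as a character.      *)
(*  - A = kQ/J: the class of a path of Q modulo the commutativity relations   *)
(*    J is determined by its tail vertex and the multiset of its arrow labels *)
(*    x_i (an exponent vector m); it is encoded as the pair (tail, m), with   *)
(*    head = tail * rho^m.  These classes form a k-basis of A; the product    *)
(*    of classes (paths compose right to left) is [pmul].                     *)
(*  - Vector spaces with a given basis B are modelled by formal finite linear *)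
(*    combinations [vec B := seq (k * B)], compared through their             *)
(*    coefficient functions [coef].  Linear maps are extensions [lin] of maps *)
(*    on basis elements.                                                      *)
(*  - Cells of Delta: None = the empty cell, Some (rho, S) = image of         *)
(*    F(u,S) with deg u = rho (Delta_0 is identified with G^* ).                *)

Section Toric.
Variables (k : fieldType) (gT : finGroupType) (n : nat)
          (coord : 'I_n -> gT -> k).

Definition diag_SL_group : Prop :=
  [/\ forall i x y, coord i (x * y)%g = coord i x * coord i y,
      forall i x, coord i x != 0,
      forall x, (forall i, coord i x = 1) -> x = 1%g
    & forall x, \prod_(i < n) coord i x = 1].

Definition chr := {ffun gT -> k}.

Definition is_character (f : chr) : bool :=
  [forall x, forall y, f (x * y)%g == f x * f y] && [forall x, f x != 0].

Definition ch1 : chr := [ffun => 1].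
Definition chmul (f g : chr) : chr := [ffun x => f x * g x].
Definition rho (i : 'I_n) : chr := [ffun x => coord i x].

Definition expo := {ffun 'I_n -> nat}.
Definition chpow (m : expo) : chr := [ffun x => \prod_(i < n) coord i x ^+ m i].
Definition ind (S : {set 'I_n}) : expo := [ffun i => nat_of_bool (i \in S)].
Definition eadd (m m' : expo) : expo := [ffun i => (m i + m' i)%N].

Definition path := (chr * expo)%type.
Definition ptail (p : path) : chr := p.1.
Definition phead (p : path) : chr := chmul p.1 (chpow p.2).
Definition plen (p : path) : nat := (\sum_(i < n) p.2 i)%N.
Definition path_ok (p : path) : bool := is_character p.1.

Definition vec (B : Type) := seq (k * B).
Definition coef (B : eqType) (v : vec B) (b : B) : k :=
  \sum_(c <- v | c.2 == b) c.1.
Definition lin (B C : Type) (f : B -> vec C) (v : vec B) : vec C :=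
  flatten [seq [seq (c.1 * x.1, x.2) | x <- f c.2] | c <- v].
Definition vscale (B : Type) (a : k) (v : vec B) : vec B :=
  [seq (a * x.1, x.2) | x <- v].
Definition vec_in (B : Type) (P : pred B) (v : vec B) : bool :=
  all (fun c => P c.2) v.
Definition vzero (B : eqType) (v : vec B) : Prop := forall b, coef v b = 0.
Definition veq (B : eqType) (v w : vec B) : Prop := forall b, coef v b = coef w b.

Definition pmul (p q : path) : vec path :=
  if ptail p == phead q then [:: (1, (ptail q, eadd p.2 q.2))] else [::].

Definition cell := option (chr * {set 'I_n}).
Definition in_Delta (c : cell) : bool :=
  if c is Some (r, _) then is_character r else true.
Definition ctail (c : cell) : chr := if c is Some (r, _) then r else ch1.
Definition chead (c : cell) : chr :=
  if c is Some (r, X) then chmul r (chpow (ind X)) else ch1.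

(* the face F(u + sum_{i in W} chi_i, T) of F(u, S) (T, W disjoint subsets
   of S), where deg u = r *)
Definition fcell (r : chr) (T W : {set 'I_n}) : cell :=
  Some (chmul r (chpow (ind W)), T).

Definition is_facet (eta eta' : cell) : Prop :=
  match eta with
  | None => False
  | Some (r, X) =>
      if X == set0 then eta' = None
      else exists2 i, i \in X &
             (eta' = fcell r (X :\ i) set0 \/ eta' = fcell r (X :\ i) [set i])
  end.

Definition incidence (eps : cell -> cell -> int) : Prop :=
  [/\ forall c c', in_Delta c -> in_Delta c' -> eps c c' \in [:: 0%Z; 1%Z; (-1)%Z],
      forall c c', in_Delta c -> in_Delta c' -> (eps c c' != 0%Z <-> is_facet c c'),
      forall r, is_character r -> eps (Some (r, set0)) None = 1%Z,
      (* k = 1 : the codim-2 face is the empty cell *)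
      forall r i, is_character r ->
        (eps (Some (r, [set i])) (fcell r set0 set0) * eps (fcell r set0 set0) None
       + eps (Some (r, [set i])) (fcell r set0 [set i])
           * eps (fcell r set0 [set i]) None)%R = 0%Z
    & (* k >= 2 : every (lifted) codim-2 face F(u + sum_W chi, S\{i,j}) *)
      forall r (X W : {set 'I_n}) i j, is_character r ->
        i \in X -> j \in X -> i != j -> W \subset [set i; j] ->
        let eta := Some (r, X) in
        let eta2 := fcell r (X :\ i :\ j) W in
        let F1 := fcell r (X :\ i) (W :&: [set i]) in
        let F2 := fcell r (X :\ j) (W :&: [set j]) in
        (eps eta F1 * eps F1 eta2 + eps eta F2 * eps F2 eta2)%R = 0%Z].

(* derivatives with respect to the face fcell r T W of Some (r, X) *)
Definition lder (r : chr) (S T W : {set 'I_n}) : path :=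
  (chead (fcell r T W), ind ((S :\: T) :\: W)).
Definition rder (r : chr) (W : {set 'I_n}) : path := (r, ind W).

(* basis of P_k : A e_h(eta) (x) [eta] (x) e_t(eta) A  ~  (eta, p, q) *)
Definition pb := (cell * path * path)%type.
Definition pb_ok (d : nat) (b : pb) : bool :=
  let: (c, p, q) := b in
  if c is Some (r, X) then
    [&& is_character r, #|X| == d, path_ok p, ptail p == chead c,
        path_ok q & phead q == ctail c]
  else false.

Definition tens (x : vec path) (c : cell) (y : vec path) : vec pb :=
  [seq (a.1 * b.1, (c, a.2, b.2)) | a <- x, b <- y].

Definition dbasis (eps : cell -> cell -> int) (b : pb) : vec pb :=
  let: (c, p, q) := b in
  if c is Some (r, X) then
    flatten [seq flatten
      [seq vscale (eps c (fcell r (X :\ i) W))%:~R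
             (tens (pmul p (lder r X (X :\ i) W)) (fcell r (X :\ i) W)
                   (pmul (rder r W) q))
      | W <- [:: set0; [set i]]] | i <- enum X]
  else [::].
Definition dmap (eps : cell -> cell -> int) : vec pb -> vec pb := lin (dbasis eps).

Definition mubasis (b : pb) : vec path := let: (_, p, q) := b in pmul p q.
Definition mu : vec pb -> vec path := lin mubasis.

(* 0 -> P_n -> ... -> P_1 -> P_0 -> A -> 0 is exact, and minimal:
   im d_k is contained in rad(A) P_(k-1) + P_(k-1) rad(A), where rad(A)
   is the arrow ideal (spanned by paths of positive length). *)
Definition minimal_resolution (eps : cell -> cell -> int) : Prop :=
  [/\ forall a, vec_in path_ok a ->
        exists2 v, vec_in (pb_ok 0) v & veq (mu v) a,
      forall v, vec_in (pb_ok 0) v ->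
        (vzero (mu v) <-> exists2 w, vec_in (pb_ok 1) w & veq (dmap eps w) v),
      forall d, (1 <= d < n)%N -> forall v, vec_in (pb_ok d) v ->
        (vzero (dmap eps v) <->
           exists2 w, vec_in (pb_ok d.+1) w & veq (dmap eps w) v),
      (0 < n)%N -> forall v, vec_in (pb_ok n) v -> vzero (dmap eps v) -> vzero v
    & forall d, (1 <= d <= n)%N -> forall v, vec_in (pb_ok d) v ->
        forall b : pb, coef (dmap eps v) b != 0 ->
          (0 < plen b.1.2 + plen b.2)%N].

End Toric.

From Pilot Require Import Defs.
From HB Require Import structures.
From mathcomp Require Import all_boot all_order all_algebra all_fingroup.
From mathcomp Require Import ring zify.

(* A k-basis of P_d consists of the elements [a] (x) [eta] (x) [(t, b)] made of a
   path (t, b) on the right, a d-cell eta spanned by X at its head, and a left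
   path with exponent vector a.  The differential sends such an element to the
   signed facets obtained by dropping a direction i of X and pushing the arrow
   x_i into the left or the right factor; the two routes to a codimension-two
   face cancel by the incidence condition, so d^2 = 0 and mu d_1 = 0.
   For exactness, sort basis elements by their pivot, the least index lying in X
   or in the support of b.  If the pivot j is not in X, the element is, up to the
   unit incidence sign, the facet of the cell X + j that pushes x_j to the
   right; hence modulo the image of d and elements with a shorter right path,
   every element reduces to one whose pivot lies in X, or in degree 0 to one
   with no pivot at all.  On the span of the former d is injective, since the
   pivot facet of such an element arises otherwise only from elements with a
   longer right path; on the latter mu is injective.  Minimality holds because
   every term of d carries an arrow in one of the two outer factors. *)

Set Implicit Arguments.
Unset Strict Implicit.
Unset Printing Implicit Defensive.

Import GRing.Theory.
Local Open Scope ring_scope.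

Section FormalSums.
Variable k : fieldType.

Lemma coef_sumE (B : eqType) (v : vec k B) b :
  coef v b = \sum_(c <- v) c.1 * (c.2 == b)%:R.
Proof.
rewrite /coef big_mkcond; apply: eq_bigr => c _.
by case: eqP => _; rewrite ?mulr1 ?mulr0.
Qed.

Lemma coef_nil (B : eqType) b : coef ([::] : vec k B) b = 0.
Proof. by rewrite /coef big_nil. Qed.

Lemma coef_cat (B : eqType) (v w : vec k B) b :
  coef (v ++ w) b = coef v b + coef w b.
Proof. by rewrite /coef big_cat. Qed.

Lemma coef_seq_cons (B : eqType) (c : k * B) (v : vec k B) b :
  coef (c :: v) b = c.1 * (c.2 == b)%:R + coef v b.
Proof. by rewrite !coef_sumE big_cons. Qed.

Lemma coef_single (B : eqType) (x : B) b : coef [:: (1 : k, x)] b = (x == b)%:R.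
Proof. by rewrite coef_seq_cons coef_nil addr0 mul1r. Qed.

Lemma coef_vscale (B : eqType) a (v : vec k B) b :
  coef (vscale a v) b = a * coef v b.
Proof.
by rewrite !coef_sumE /vscale big_map mulr_sumr; apply: eq_bigr => c _ /=; rewrite mulrA.
Qed.

Lemma coef_flatten (B : eqType) (I : Type) (f : I -> vec k B) (r : seq I) b :
  coef (flatten [seq f i | i <- r]) b = \sum_(i <- r) coef (f i) b.
Proof.
elim: r => [|i r IH]; first by rewrite /= coef_nil big_nil.
by rewrite /= coef_cat IH big_cons.
Qed.

Lemma coef_notin (B : eqType) (v : vec k B) b : b \notin map snd v -> coef v b = 0.
Proof.
elim: v => [|c v IH]; first by rewrite coef_nil.
rewrite /= inE negb_or => /andP [cb bv]; rewrite coef_seq_cons IH //.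
by rewrite eq_sym (negbTE cb) mulr0 addr0.
Qed.

Lemma coef_neq0_mem (B : eqType) (v : vec k B) b : coef v b != 0 -> b \in map snd v.
Proof. by apply: contraR => /coef_notin ->. Qed.

Lemma mem_vscale (B : eqType) a (v : vec k B) c :
  c \in vscale a v -> c.2 \in map snd v.
Proof. by case/mapP => c0 c0v ->; rewrite /= map_f. Qed.

Lemma vec_in_vscale (B : eqType) (P : pred B) a (v : vec k B) :
  vec_in P (vscale a v) = vec_in P v.
Proof. by rewrite /vec_in /vscale all_map. Qed.

Lemma vec_in_cat (B : eqType) (P : pred B) (v w : vec k B) :
  vec_in P (v ++ w) = vec_in P v && vec_in P w.
Proof. by rewrite /vec_in all_cat. Qed.

Lemma sum_coef (B : eqType) (v : vec k B) (g : B -> k) (s : seq B) :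
  uniq s -> {subset map snd v <= s} ->
  \sum_(c <- v) c.1 * g c.2 = \sum_(b <- s) coef v b * g b.
Proof.
move=> us sub; under [RHS]eq_bigr do rewrite coef_sumE mulr_suml.
rewrite exchange_big /=; apply: eq_big_seq => c cv.
have cs : c.2 \in s by apply: sub; apply: map_f.
rewrite (bigD1_seq c.2) //= eqxx mulr1 big1 ?addr0 // => b bc.
by rewrite eq_sym (negbTE bc) mulr0 mul0r.
Qed.

Lemma coef_split2 (B : eqType) (v : vec k B) x z b : x != z ->
  coef v b = coef v x * (x == b)%:R + coef v z * (z == b)%:R
             + coef [seq c <- v | (c.2 != x) && (c.2 != z)] b.
Proof.
move=> xz; rewrite /coef big_filter_cond.
have [<-|bx] := eqVneq x b.
  rewrite eq_sym (negbTE xz) mulr1 mulr0 addr0 [X in _ + X]big1 ?addr0 // => c.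
  by case/andP=> /andP [/negbTE -> _].
have [<-|bz] := eqVneq z b.
  rewrite mulr1 mulr0 add0r [X in _ + X]big1 ?addr0 // => c.
  by case/andP=> /andP [_ /negbTE ->].
rewrite !mulr0 !add0r [RHS]big_mkcond [LHS]big_mkcond /=.
apply: eq_bigr => c _; case: eqP => [E|_]; last by rewrite andbF.
by rewrite E eq_sym bx eq_sym bz.
Qed.

Lemma lin_cat (B C : Type) (f : B -> vec k C) v w :
  lin f (v ++ w) = lin f v ++ lin f w.
Proof. by rewrite /lin map_cat flatten_cat. Qed.

Lemma coef_lin (B : Type) (C : eqType) (f : B -> vec k C) v b :
  coef (lin f v) b = \sum_(c <- v) c.1 * coef (f c.2) b.
Proof.
elim: v => [|c v IH]; first by rewrite /lin /= coef_nil big_nil.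
by rewrite [lin f _]/= coef_cat coef_vscale IH big_cons.
Qed.

Lemma coef_lin_vscale (B : Type) (C : eqType) (f : B -> vec k C) a v b :
  coef (lin f (vscale a v)) b = a * coef (lin f v) b.
Proof.
by rewrite !coef_lin /vscale big_map mulr_sumr; apply: eq_bigr => c _ /=; rewrite mulrA.
Qed.

Lemma coef_lin_lin (B C : Type) (E : eqType) (f : C -> vec k E) (g : B -> vec k C) v b :
  coef (lin f (lin g v)) b = \sum_(c <- v) c.1 * coef (lin f (g c.2)) b.
Proof.
elim: v => [|c v IH]; first by rewrite /lin /= coef_nil big_nil.
rewrite [lin g _]/= lin_cat coef_cat IH big_cons; congr (_ + _).
exact: coef_lin_vscale.
Qed.

Lemma lin_veq (B C : eqType) (f : B -> vec k C) v w :
  veq v w -> veq (lin f v) (lin f w).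
Proof.
move=> vw b; rewrite !coef_lin.
have sub_vw (u : vec k B) : {subset map snd u <= map snd v ++ map snd w} ->
  \sum_(c <- u) c.1 * coef (f c.2) b =
  \sum_(x <- undup (map snd (v ++ w))) coef u x * coef (f x) b.
  by move=> su; apply: sum_coef; rewrite ?undup_uniq // => x /su; rewrite mem_undup map_cat.
rewrite !sub_vw => [|x xw|x xv]; rewrite ?mem_cat ?xv ?xw ?orbT //.
by apply: eq_bigr => x _; rewrite vw.
Qed.

Lemma mem_lin (B C : eqType) (f : B -> vec k C) v b :
  b \in map snd (lin f v) -> exists2 c, c \in v & b \in map snd (f c.2).
Proof.
elim: v => [|c v IH] //=.
rewrite map_cat mem_cat => /orP [bc|/IH [c' c'v bc']].
  by exists c; rewrite ?mem_head //; move: bc; rewrite /vscale -map_comp.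
by exists c'; rewrite // inE c'v orbT.
Qed.

Lemma sum_neq0 (I : finType) (F : I -> k) (A : {set I}) :
  \sum_(i in A) F i != 0 -> exists2 i, i \in A & F i != 0.
Proof.
have [i /andP [iA Fi]|none] := pickP [pred i | (i \in A) && (F i != 0)].
  by exists i.
rewrite big1 ?eqxx // => i iA; apply/eqP.
by have := none i; rewrite /= iA /= => /negbFE.
Qed.

Lemma veq_catr (B : eqType) (v u w : vec k B) : veq v (u ++ w) -> vzero w -> veq u v.
Proof. by move=> E w0 y; rewrite E coef_cat w0 addr0. Qed.

Lemma vzero_lin_cat (B C : eqType) (f : B -> vec k C) (v u w : vec k B) :
  veq v (u ++ w) -> vzero (lin f u) -> vzero (lin f v) -> vzero (lin f w).
Proof.
by move=> E u0 v0 y; have := v0 y; rewrite (lin_veq f E y) lin_cat coef_cat u0 add0r.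
Qed.

End FormalSums.

Lemma sum_antisym_pairs (V : zmodType) (n : nat) (F : 'I_n -> 'I_n -> V) (X : {set 'I_n}) :
  (forall i j, i \in X -> j \in X -> i != j -> F i j + F j i = 0) ->
  \sum_(i in X) \sum_(j in X :\ i) F i j = 0.
Proof.
move=> FC; rewrite pair_big_dep /= (bigID (fun p : 'I_n * 'I_n => (p.1 < p.2)%N)) /=.
pose swap (p : 'I_n * 'I_n) := (p.2, p.1).
have swap_inj : injective swap by move=> [a b] [c d] [-> ->].
rewrite [X in _ + X](reindex_inj swap_inj) /=.
rewrite [X in _ + X](eq_bigl (fun p : 'I_n * 'I_n =>
  (p.1 \in X) && (p.2 \in X :\ p.1) && (p.1 < p.2)%N)); last first.
  move=> [a b] /=; rewrite !inE.
  case: (ltngtP a b) => [ab|ba|/val_inj ->] /=; rewrite ?eqxx ?andbF //.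
  have ab' : a != b by rewrite -val_eqE /= ltn_eqF.
  by rewrite ab' eq_sym ab' !andbT; case: (a \in X); case: (b \in X).
rewrite -big_split /= big1 // => [[a b]] /=.
rewrite !inE => /andP [/andP [aX /andP [ba bX]] _].
by apply: FC; rewrite // eq_sym.
Qed.

Section SetFacts.
Variable T : finType.

Lemma setDD1 (X : {set T}) (i : T) : i \in X -> X :\: (X :\ i) = [set i].
Proof.
move=> iX; apply/setP => l; rewrite !inE.
by case: eqP => [->|_]; rewrite ?iX ?andbF ?andbT ?andNb.
Qed.

Lemma setD1C (X : {set T}) (i j : T) : X :\ i :\ j = X :\ j :\ i.
Proof. by apply/setP => l; rewrite !inE; case: (l == i); case: (l == j). Qed.

Lemma disjoint_sub1 (Wi Wj : {set T}) (i j : T) :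
  i != j -> Wi \subset [set i] -> Wj \subset [set j] -> [disjoint Wi & Wj].
Proof.
move=> ij /subsetP sWi /subsetP sWj; apply/pred0P => l /=.
apply/negP => /andP [/sWi li /sWj lj].
by move: li lj; rewrite !inE => /eqP -> /eqP E; rewrite E eqxx in ij.
Qed.

Lemma setU_sub1I (Wi Wj : {set T}) (i j : T) :
  i != j -> Wi \subset [set i] -> Wj \subset [set j] -> (Wi :|: Wj) :&: [set i] = Wi.
Proof.
move=> ij /subsetP sWi /subsetP sWj; apply/setP => l; rewrite !inE.
have [->|li] := eqVneq l i.
  rewrite andbT; case iWj: (i \in Wj); last by rewrite orbF.
  by have := sWj i iWj; rewrite inE (negbTE ij).
rewrite andbF; case lWi: (l \in Wi) => //.
by have := sWi l lWi; rewrite inE (negbTE li).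
Qed.

End SetFacts.

Section Toric.
Variables (k : fieldType) (gT : finGroupType) (n : nat) (coord : 'I_n -> gT -> k).

Local Notation chpow := (chpow coord).
Local Notation chr := (chr k gT).
Local Notation expo := (expo n).
Local Notation pb := (pb k gT n).
Local Notation cell := (cell k gT n).
Variable eps : cell -> cell -> int.
Local Notation dbasis := (dbasis coord eps).
Local Notation dmap := (dmap coord eps).
Implicit Types (t : chr) (a b : expo) (X W Wi Wj : {set 'I_n}) (i j : 'I_n).

Lemma chmulA (f g h : chr) : chmul (chmul f g) h = chmul f (chmul g h).
Proof. by apply/ffunP => x; rewrite !ffunE mulrA. Qed.

Lemma chpowD (m m' : expo) : chpow (eadd m m') = chmul (chpow m) (chpow m').
Proof.
apply/ffunP => x; rewrite !ffunE -big_split /=; apply: eq_bigr => i _.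
by rewrite ffunE exprD.
Qed.

Lemma chmul_chpowA (t : chr) (b m : expo) :
  chmul (chmul t (chpow b)) (chpow m) = chmul t (chpow (eadd m b)).
Proof.
by rewrite chmulA chpowD; congr chmul; apply/ffunP => x; rewrite !ffunE mulrC.
Qed.

Lemma chmul_chpow0 (r : chr) : chmul r (chpow (ind set0)) = r.
Proof.
by apply/ffunP => x; rewrite !ffunE big1 ?mulr1 // => i _; rewrite ffunE inE.
Qed.

Lemma eaddC (m m' : expo) : eadd m m' = eadd m' m.
Proof. by apply/ffunP => i; rewrite !ffunE addnC. Qed.

Lemma eaddA (m m' m'' : expo) : eadd m (eadd m' m'') = eadd (eadd m m') m''.
Proof. by apply/ffunP => i; rewrite !ffunE addnA. Qed.

Lemma eadd0 (m : expo) : eadd m (ind set0) = m.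
Proof. by apply/ffunP => i; rewrite !ffunE inE addn0. Qed.

Lemma ind_setU (A B : {set 'I_n}) :
  [disjoint A & B] -> ind (A :|: B) = eadd (ind A) (ind B).
Proof.
move=> dAB; apply/ffunP => i; rewrite !ffunE inE.
by case iA: (i \in A); case iB: (i \in B); rewrite // (disjointFr dAB iA) in iB.
Qed.

Lemma eadd_indU (A B : {set 'I_n}) (b : expo) : [disjoint A & B] ->
  eadd (ind A) (eadd (ind B) b) = eadd (ind (A :|: B)) b.
Proof. by move=> dAB; rewrite eaddA ind_setU. Qed.

Definition esum (m : expo) : nat := \sum_(l < n) m l.

Lemma esumD (m m' : expo) : esum (eadd m m') = (esum m + esum m')%N.
Proof. by rewrite /esum -big_split /=; apply: eq_bigr => i _; rewrite ffunE. Qed.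

Lemma esum_ind (A : {set 'I_n}) : esum (ind A) = #|A|.
Proof.
rewrite /esum -sum1_card [RHS]big_mkcond /=; apply: eq_bigr => i _.
by rewrite ffunE; case: (i \in A).
Qed.

(* The basis element [a] (x) [eta] (x) [(t, b)] of P_#|X|, where eta is the cell
   spanned by X at the head t rho^b of the right path. *)
Definition pb_of (t : chr) (b : expo) (X : {set 'I_n}) (a : expo) : pb :=
  (Some (chmul t (chpow b), X), (chmul (chmul t (chpow b)) (chpow (ind X)), a), (t, b)).

Lemma pb_of_eq t b X a t' b' X' a' :
  (pb_of t b X a == pb_of t' b' X' a') = [&& t == t', b == b', X == X' & a == a'].
Proof.
apply/eqP/and4P => [E|[/eqP -> /eqP -> /eqP -> /eqP ->]] //.
by case: E => _ -> _ -> -> ->; rewrite !eqxx.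
Qed.

(* W = [set i] pushes the arrow x_i into the right factor, W = set0 into the left. *)
Definition pb_face t b X a i (W : {set 'I_n}) : pb :=
  pb_of t (eadd (ind W) b) (X :\ i) (eadd a (ind ([set i] :\: W))).

Definition face_sign t b X i W : k :=
  (eps (Some (chmul t (chpow b), X)) (fcell coord (chmul t (chpow b)) (X :\ i) W))%:~R.

Lemma pmulE (p q : Defs.path k gT n) : p.1 = phead coord q ->
  pmul coord p q = [:: (1, (q.1, eadd p.2 q.2))].
Proof. by move=> E; rewrite /pmul /ptail E eqxx. Qed.

Lemma ind_face_split (X W : {set 'I_n}) i : i \in X -> W \subset [set i] ->
  eadd (ind W) (eadd (ind (X :\ i)) (ind ([set i] :\: W))) = ind X.
Proof.
move=> iX /subsetP sW; apply/ffunP => l; rewrite !ffunE !inE.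
have [->|li] := eqVneq l i; first by rewrite iX; case: (i \in W).
case lW: (l \in W); first by have := sW l lW; rewrite inE (negbTE li).
by case: (l \in X).
Qed.

Lemma dbasis_face t b X a i W : i \in X -> W \subset [set i] ->
  vscale (eps (Some (chmul t (chpow b), X))
              (fcell coord (chmul t (chpow b)) (X :\ i) W))%:~R
    (tens (pmul coord (chmul (chmul t (chpow b)) (chpow (ind X)), a)
             (lder coord (chmul t (chpow b)) X (X :\ i) W))
          (fcell coord (chmul t (chpow b)) (X :\ i) W)
          (pmul coord (rder (chmul t (chpow b)) W) (t, b)))
  = [:: (face_sign t b X i W, pb_face t b X a i W)].
Proof.
move=> iX sW.
rewrite [pmul _ (rder _ _) _]pmulE // [pmul _ _ (lder _ _ _ _ _)]pmulE /=; last first.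
  by rewrite /phead /lder /chead /fcell /= setDD1 // !chmulA -!chpowD ind_face_split.
rewrite !mulr1 /pb_face /pb_of /face_sign /fcell setDD1 //.
by rewrite [chmul (chmul t _) (chpow (ind W))]chmul_chpowA.
Qed.

Lemma dbasis_pb_of t b X a : dbasis (pb_of t b X a) =
  flatten [seq [seq (face_sign t b X i W, pb_face t b X a i W)
               | W <- [:: set0; [set i]]] | i <- enum X].
Proof.
rewrite /Defs.dbasis /pb_of /=; congr flatten; apply/eq_in_map => i.
by rewrite mem_enum => iX /=; rewrite !dbasis_face ?sub0set ?subxx.
Qed.

Lemma mem_dbasis t b X a c : c \in dbasis (pb_of t b X a) ->
  exists i W, [/\ i \in X, W \subset [set i] & c.2 = pb_face t b X a i W].
Proof.
rewrite dbasis_pb_of => /flattenP [s /mapP [i iX ->]].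
rewrite mem_enum in iX; rewrite !inE => /orP [/eqP ->|/eqP ->]; exists i.
  by exists set0; rewrite sub0set.
by exists [set i]; rewrite subxx.
Qed.

Lemma coef_dbasis t b X a y :
  coef (dbasis (pb_of t b X a)) y =
  \sum_(i in X) (face_sign t b X i set0 * (pb_face t b X a i set0 == y)%:R
               + face_sign t b X i [set i] * (pb_face t b X a i [set i] == y)%:R).
Proof.
rewrite dbasis_pb_of coef_flatten big_enum; apply: eq_bigr => i _.
by rewrite /= !coef_seq_cons coef_nil addr0.
Qed.

Lemma pb_face_neq t b X a i j W t' b' a' W' : i != j -> i \in X ->
  (pb_face t b X a i W == pb_face t' b' X a' j W') = false.
Proof.
move=> ij iX; rewrite /pb_face pb_of_eq; apply/negbTE/negP => /and4P [_ _ /eqP E _].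
have : i \in X :\ j by rewrite !inE ij iX.
by rewrite -E !inE eqxx.
Qed.

Lemma pb_face_neqW t b X a j :
  (pb_face t b X a j set0 == pb_face t b X a j [set j]) = false.
Proof.
rewrite /pb_face pb_of_eq; apply/negbTE/negP => /and4P [_ /eqP E _ _].
have := congr1 (fun f : expo => f j) E; rewrite !ffunE !inE eqxx.
by move/eqP; rewrite eqn_add2r.
Qed.

Lemma coef_dbasis_face t b X a j W : j \in X -> W \subset [set j] ->
  coef (dbasis (pb_of t b X a)) (pb_face t b X a j W) = face_sign t b X j W.
Proof.
move=> jX sW; rewrite coef_dbasis (bigD1 j) //= big1 ?addr0; last first.
  by move=> i /andP [iX ij]; rewrite !pb_face_neq // !mulr0 addr0.
move: sW; rewrite subset1 => /orP [/eqP ->|/eqP ->].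
  by rewrite eqxx pb_face_neqW mulr0 mulr1 add0r.
by rewrite eqxx eq_sym pb_face_neqW mulr0 mulr1 addr0.
Qed.

Lemma lin_flatten (I : Type) (f : pb -> vec k pb) (g : I -> vec k pb) (r : seq I) :
  lin f (flatten [seq g x | x <- r]) = flatten [seq lin f (g x) | x <- r].
Proof. by elim: r => [|x r IH] //=; rewrite lin_cat IH. Qed.

Lemma coef_ddbasis t b X a y :
  coef (lin dbasis (dbasis (pb_of t b X a))) y =
  \sum_(i in X) (face_sign t b X i set0 * coef (dbasis (pb_face t b X a i set0)) y
               + face_sign t b X i [set i] * coef (dbasis (pb_face t b X a i [set i])) y).
Proof.
rewrite dbasis_pb_of lin_flatten coef_flatten big_enum; apply: eq_bigr => i _.
by rewrite coef_lin !big_cons big_nil addr0.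
Qed.

Lemma pb_okP d (x : pb) : pb_ok coord d x ->
  exists t b X a, [/\ x = pb_of t b X a, is_character t & #|X| = d].
Proof.
case: x => [[[[r X]|] [p1 a]] [t b]] //=.
case/and5P => _ /eqP HX _ /eqP Hp /andP [Ht /eqP Hq].
exists t, b, X, a; split => //.
by rewrite /phead /ctail /= in Hq; rewrite /ptail /chead /= in Hp; rewrite /pb_of Hp -Hq.
Qed.

(* [free_below j b X]: j is at most the pivot of (b, X). *)
Definition free_below j b X := forall l : 'I_n, (l < j)%N -> l \notin X /\ b l = 0%N.
Definition pivot_in b X := exists2 j, j \in X & free_below j b X.
Definition pivot_out b X :=
  exists j b', [/\ j \notin X, b = eadd (ind [set j]) b' & free_below j b' X].
Definition no_pivot b X := X = set0 /\ b = ind set0.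

Lemma pivot_cases b X : [\/ pivot_in b X, pivot_out b X | no_pivot b X].
Proof.
pose P l := (l \in X) || (0 < b l)%N.
have [j0 Pj0|none] := pickP P; last first.
  apply: Or33; split.
    by apply/setP => l; have := none l; rewrite /P inE; case: (l \in X).
  by apply/ffunP => l; have := none l; rewrite /P ffunE inE orbC; case: (b l).
have [j Pj jmin] := @arg_minnP _ j0 P (fun l => nat_of_ord l) Pj0.
have low : free_below j b X.
  move=> l lj; case Pl: (P l); first by have := jmin l Pl; rewrite leqNgt lj.
  by move: Pl; rewrite /P; case: (l \in X) => //=; case: (b l).
case jX: (j \in X); first by apply: Or31; exists j.
apply: Or32; exists j, [ffun l => (b l - (l == j))%N]; split.
- by rewrite jX.
- apply/ffunP => l; rewrite !ffunE inE.
  case: eqP => [->|_]; last by rewrite subn0.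
  by move: Pj; rewrite /P jX /= => bj; rewrite add1n subn1 prednK.
- by move=> l lj; have [lX bl] := low l lj; rewrite ffunE bl.
Qed.

Lemma free_below_face b' X j i W : j \notin X -> free_below j b' X ->
  i \in X -> W \subset [set i] -> pivot_in (eadd (ind W) b') ((j |: X) :\ i).
Proof.
move=> jX low iX sW; exists j.
  by rewrite !inE eqxx andbT; apply/eqP => ji; rewrite ji iX in jX.
move=> l lj; have [lX bl] := low l lj; split.
  have lj' : l != j by rewrite -val_eqE /= ltn_eqF.
  by rewrite !inE negb_and negb_or lX lj' orbT.
rewrite !ffunE bl addn0; case lW: (l \in W) => //.
by move/subsetP: sW => /(_ l lW); rewrite inE => /eqP li; rewrite li iX in lX.
Qed.

Lemma pivot_top_face_eq t b X a j t' b' X' a' i W :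
  j \in X -> free_below j b X -> pivot_in b' X' -> i \in X' -> W \subset [set i] ->
  pb_face t' b' X' a' i W = pb_face t b X a j [set j] ->
  pb_of t' b' X' a' = pb_of t b X a \/ (esum b < esum b')%N.
Proof.
move=> jX lowj [j' j'X' low'] iX' sW /eqP.
rewrite /pb_face pb_of_eq => /and4P [/eqP -> /eqP Eb /eqP EX /eqP Ea].
move: sW; rewrite subset1 => /orP [/eqP WE | /eqP W0]; last first.
  right; move: (congr1 esum Eb); rewrite W0 !esumD !esum_ind cards0 cards1 add0n => ->.
  by rewrite add1n ltnSn.
subst W; left.
have Eb_at l : ((l == i) + b' l = (l == j) + b l)%N.
  by have := congr1 (fun f : expo => f l) Eb; rewrite !ffunE !inE.
have ij : i = j.
  apply/eqP/negPn/negP => nij.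
  have bi : (0 < b i)%N by have := Eb_at i; rewrite eqxx (negbTE nij) add0n => <-.
  have bj : (0 < b' j)%N by have := Eb_at j; rewrite eqxx eq_sym (negbTE nij) add0n => ->.
  have jX' : j \notin X'.
    apply/negP => jX'; have : j \in X' :\ i by rewrite !inE eq_sym nij jX'.
    by rewrite EX !inE eqxx.
  have ji : (j < i)%N.
    case: (ltngtP i j) => [lij|//|/val_inj eij]; last by rewrite eij eqxx in nij.
    by have [_ bi0] := lowj i lij; rewrite bi0 in bi.
  case: (ltngtP j' j) => [j'j|jj'|/val_inj ej'j].
  - have j'i : j' != i by apply: contraTneq j'j => ->; rewrite -leqNgt ltnW.
    have : j' \in X' :\ i by rewrite !inE j'i j'X'.
    by rewrite EX !inE => /andP [_ j'X]; have [] := lowj j' j'j; rewrite j'X.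
  - by have [_ bj0] := low' j jj'; rewrite bj0 in bj.
  - by rewrite -ej'j j'X' in jX'.
subst i.
have -> : b' = b by apply/ffunP => l; apply/eqP; rewrite -(eqn_add2l (l == j)) Eb_at.
have -> : X' = X by rewrite -(setD1K iX') EX setD1K.
by move: Ea; rewrite setDv !eadd0 => ->.
Qed.

Definition pb_with d (P : expo -> {set 'I_n} -> Prop) (x : pb) :=
  exists t b X a, [/\ x = pb_of t b X a, is_character t, #|X| = d & P b X].

Hypothesis Hdiag : diag_SL_group coord.

Lemma is_character_mul (f g : chr) :
  is_character f -> is_character g -> is_character (chmul f g).
Proof.
case/andP => /forallP fM /forallP f0 /andP [/forallP gM /forallP g0].
apply/andP; split; apply/forallP => x; last by rewrite ffunE mulf_neq0.
apply/forallP => y; rewrite !ffunE.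
move/forallP: (fM x) => /(_ y) /eqP ->; move/forallP: (gM x) => /(_ y) /eqP ->.
by rewrite mulrACA.
Qed.

Lemma is_character_chpow m : is_character (chpow m).
Proof.
case: Hdiag => coordM coord0 _ _.
apply/andP; split; apply/forallP => x; last first.
  by rewrite ffunE; apply/prodf_neq0 => i _; exact: expf_neq0.
apply/forallP => y; rewrite !ffunE -big_split /=; apply/eqP/eq_bigr => i _.
by rewrite coordM exprMn.
Qed.

Lemma is_character_head t b : is_character t -> is_character (chmul t (chpow b)).
Proof. by move=> Ht; apply: is_character_mul => //; exact: is_character_chpow. Qed.

Lemma pb_ok_pb_of d t b X a : is_character t -> #|X| = d -> pb_ok coord d (pb_of t b X a).
Proof.
move=> Ht HX; rewrite /pb_ok /pb_of /path_ok /ptail /phead /chead /ctail /=.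
by rewrite HX !eqxx Ht !is_character_head.
Qed.

Hypothesis Hinc : incidence coord eps.

Lemma face_sign_neq0 t b X i W : is_character t -> i \in X ->
  W \subset [set i] -> face_sign t b X i W != 0.
Proof.
move=> Ht iX sW; case: Hinc => eps_val eps_facet _ _ _.
have D1 : in_Delta (Some (chmul t (chpow b), X)) by rewrite /= is_character_head.
have D2 : in_Delta (fcell coord (chmul t (chpow b)) (X :\ i) W).
  by rewrite /= !is_character_head.
have F : is_facet coord (Some (chmul t (chpow b), X))
                        (fcell coord (chmul t (chpow b)) (X :\ i) W).
  rewrite /=; case: eqP => [X0|_]; first by move: iX; rewrite X0 inE.
  by exists i => //; move: sW; rewrite subset1 => /orP [/eqP ->|/eqP ->]; [right|left].
have [_ /(_ F) nz] := eps_facet _ _ D1 D2.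
have := eps_val _ _ D1 D2; rewrite /face_sign !inE.
by case/or3P => /eqP E; rewrite E in nz *; rewrite //= ?oppr_eq0 oner_eq0.
Qed.

Lemma dbasis_top_face d t b X a j s :
  j \in X -> free_below j b X -> pb_with d pivot_in s ->
  coef (dbasis s) (pb_face t b X a j [set j]) != 0 ->
  s = pb_of t b X a \/ (esum b < esum s.2.2)%N.
Proof.
move=> jX lowj [t' [b' [X' [a' [-> _ _ piv']]]]].
set top := pb_face t b X a j [set j].
rewrite coef_dbasis => /sum_neq0 [i iX' nz].
have [W sW EW] : exists2 W : {set 'I_n}, W \subset [set i] & pb_face t' b' X' a' i W = top.
  have [E0|ne0] := eqVneq (pb_face t' b' X' a' i set0) top.
    by exists set0; rewrite ?sub0set.
  have [E1|ne1] := eqVneq (pb_face t' b' X' a' i [set i]) top; first by exists [set i].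
  by move: nz; rewrite (negbTE ne0) (negbTE ne1) !mulr0 addr0 eqxx.
exact: pivot_top_face_eq jX lowj piv' iX' sW EW.
Qed.

Lemma pb_withW d (P Q : expo -> {set 'I_n} -> Prop) x :
  (forall b X, #|X| = d -> P b X -> Q b X) -> pb_with d P x -> pb_with d Q x.
Proof.
by move=> PQ [t [b [X [a [Ex Ht HX PbX]]]]]; exists t, b, X, a; split => //; apply: PQ.
Qed.

Lemma dmap_inj_pivot_in d (w : vec k pb) :
  (forall c, c \in w -> pb_with d pivot_in c.2) -> vzero (dmap w) -> vzero w.
Proof.
move=> w_piv dw0.
pose M := \max_(c <- w) esum c.2.2.2.
suff coef0 N y : (M < esum y.2.2 + N)%N -> coef w y = 0.
  by move=> y; apply: (coef0 M.+1); rewrite addnS ltnS leq_addl.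
elim: N y => [|N IH] y yM.
  apply: coef_notin; apply/mapP => -[c cw yE].
  have := @leq_bigmax_seq _ w xpredT (fun c : k * pb => esum c.2.2.2) c cw isT.
  by rewrite -/M -yE leqNgt -(addn0 (esum _)) yM.
have [yw|/coef_notin //] := boolP (y \in map snd w).
have [c cw yE] := mapP yw.
have [t [b [X [a [Ey Ht _ [j jX lowj]]]]]] := w_piv c cw.
rewrite -yE in Ey.
pose top := pb_face t b X a j [set j].
have := dw0 top; rewrite /dmap coef_lin.
rewrite (@sum_coef _ _ w (fun x => coef (dbasis x) top) (undup (map snd w))) ?undup_uniq //;
  last by move=> x; rewrite mem_undup.
rewrite (bigD1_seq y) ?mem_undup ?undup_uniq //= big1_seq ?addr0.
  rewrite {2}Ey coef_dbasis_face ?sub1set ?inE // => /eqP.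
  by rewrite mulf_eq0 (negbTE (face_sign_neq0 b Ht jX (subxx _))) orbF => /eqP.
move=> s /andP [sy]; rewrite mem_undup => /mapP [c' c'w sE].
have [->|nz] := eqVneq (coef (dbasis s) top) 0; first by rewrite mulr0.
have s_piv : pb_with d pivot_in s by rewrite sE; exact: w_piv.
have [sEy|lt] := dbasis_top_face jX lowj s_piv nz; first by rewrite sEy -Ey eqxx in sy.
by rewrite IH ?mul0r //; apply: leq_trans yM _; rewrite Ey /= addnS ltn_add2r.
Qed.

Definition reduced b X := pivot_in b X \/ no_pivot b X.

Lemma dbasis_split_top_face d t b X a j :
  is_character t -> #|X| = d -> j \notin X -> free_below j b X ->
  exists2 R, (forall c, c \in R -> pb_with d pivot_in c.2) &
    veq (dbasis (pb_of t b (j |: X) a))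
        ((face_sign t b (j |: X) j [set j], pb_face t b (j |: X) a j [set j])
         :: (face_sign t b (j |: X) j set0, pb_face t b (j |: X) a j set0) :: R).
Proof.
move=> Ht HX jX low; set x := pb_face _ _ _ _ j [set j]; set z := pb_face _ _ _ _ j set0.
have jY : j \in j |: X by rewrite !inE eqxx.
exists [seq c <- dbasis (pb_of t b (j |: X) a) | (c.2 != x) && (c.2 != z)].
  move=> c; rewrite mem_filter => /andP [/andP [cx cz] /mem_dbasis [i [W [iY sW Ec]]]].
  have ij : i != j.
    apply/eqP => ij; subst i; move: sW; rewrite subset1 => /orP [/eqP WE|/eqP W0].
      by move: cx; rewrite Ec WE eqxx.
    by move: cz; rewrite Ec W0 eqxx.
  have iX : i \in X by move: iY; rewrite !inE (negbTE ij).
  exists t, (eadd (ind W) b), ((j |: X) :\ i), (eadd a (ind ([set i] :\: W))); split => //.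
    have := cardsD1 i (j |: X); rewrite iY cardsU1 jX HX /= => /eqP.
    by rewrite eqn_add2l => /eqP.
  exact: free_below_face.
move=> y; rewrite (coef_split2 _ y (_ : x != z)); last by rewrite eq_sym pb_face_neqW.
by rewrite !coef_dbasis_face ?sub0set // !coef_seq_cons addrA.
Qed.

Lemma reduce_pb d N x : (esum x.2.2 < N)%N -> pb_ok coord d x ->
  exists w v, [/\ vec_in (pb_ok coord d.+1) w,
                  forall c, c \in v -> pb_with d reduced c.2
                & veq [:: (1, x)] (dmap w ++ v)].
Proof.
elim: N x => [//|N IH] x xN /pb_okP [t [b [X [a [Ex Ht HX]]]]]; subst x.
case: (pivot_cases b X) => [piv|[j [b' [jX Eb low]]]|piv];
  try by exists [::], [:: (1, pb_of t b X a)]; split => // c;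
         rewrite inE => /eqP ->; exists t, b, X, a; split => //; by [left|right].
set Y := j |: X; have jY : j \in Y by rewrite !inE eqxx.
have -> : pb_of t b X a = pb_face t b' Y a j [set j].
  by rewrite /pb_face Eb setU1K // setDv eadd0.
have zN : (esum (pb_face t b' Y a j set0).2.2 < N)%N.
  by move: xN; rewrite Eb /= !esumD !esum_ind cards0 cards1.
have z_ok : pb_ok coord d (pb_face t b' Y a j set0).
  by apply: pb_ok_pb_of; rewrite // setU1K.
have [wz [vz [wz_ok vz_red Ez]]] := IH _ zN z_ok.
have [R R_piv dyE] := dbasis_split_top_face a Ht HX jX low.
set e := face_sign t b' Y j [set j]; set ez := face_sign t b' Y j set0.
have e0 : e != 0 := face_sign_neq0 b' Ht jY (subxx _).
(* d y = e x + ez z + R, so x = e^-1 d y - (ez / e) z - e^-1 R, and z reduces by induction. *)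
exists (vscale e^-1 [:: (1, pb_of t b' Y a)] ++ vscale (- (ez / e)) wz),
       (vscale (- (ez / e)) vz ++ vscale (- e^-1) R); split.
- rewrite vec_in_cat !vec_in_vscale wz_ok /vec_in /= !andbT.
  by apply: pb_ok_pb_of; rewrite // cardsU1 jX HX.
- move=> c; rewrite mem_cat => /orP [] /mem_vscale /mapP [c0 c0v ->]; first exact: vz_red.
  by apply: pb_withW (R_piv c0 c0v) => ? ? _; left.
- move=> y; have := Ez y; rewrite /dmap lin_cat !coef_cat !coef_lin_vscale !coef_vscale.
  rewrite !coef_single /= coef_nil addr0 mulr1 dyE !coef_seq_cons /= => ->.
  by field.
Qed.

Lemma reduce_vec d v : vec_in (pb_ok coord d) v ->
  exists w v', [/\ vec_in (pb_ok coord d.+1) w,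
                   forall c, c \in v' -> pb_with d reduced c.2
                 & veq v (dmap w ++ v')].
Proof.
elim: v => [|c v IH] /=; first by exists [::], [::].
case/andP => /(reduce_pb (ltnSn _)) [w1 [v1 [w1_ok v1_red E1]]].
move=> /IH [w [v' [w_ok v'_red E]]].
exists (vscale c.1 w1 ++ w), (vscale c.1 v1 ++ v'); split.
- by rewrite vec_in_cat vec_in_vscale w1_ok w_ok.
- move=> c'; rewrite mem_cat => /orP [/mem_vscale /mapP [c0 c0v ->]|].
    exact: v1_red.
  exact: v'_red.
- move=> y; rewrite (coef_seq_cons c) E -coef_single E1 /dmap !lin_cat !coef_cat.
  by rewrite coef_lin_vscale coef_vscale; ring.
Qed.

Definition dd_term t b X a y i Wi j Wj : k :=
  face_sign t b X i Wi * (face_sign t (eadd (ind Wi) b) (X :\ i) j Wj *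
    (pb_face t (eadd (ind Wi) b) (X :\ i) (eadd a (ind ([set i] :\: Wi))) j Wj == y)%:R).

Lemma dd_term_antisym t b X a y i j Wi Wj :
  is_character t -> i \in X -> j \in X -> i != j ->
  Wi \subset [set i] -> Wj \subset [set j] ->
  dd_term t b X a y i Wi j Wj = - dd_term t b X a y j Wj i Wi.
Proof.
move=> Ht iX jX ij sWi sWj; apply/eqP; rewrite -addr_eq0 /dd_term.
have dij := disjoint_sub1 ij sWi sWj.
have dji : [disjoint Wj & Wi] by rewrite disjoint_sym.
have -> : pb_face t (eadd (ind Wj) b) (X :\ j) (eadd a (ind ([set j] :\: Wj))) i Wi =
          pb_face t (eadd (ind Wi) b) (X :\ i) (eadd a (ind ([set i] :\: Wi))) j Wj.
  rewrite /pb_face (eadd_indU _ dij) (eadd_indU _ dji) setUC setD1C; congr pb_of.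
  by rewrite -!eaddA [eadd (ind _) (ind _)]eaddC.
rewrite !mulrA -mulrDl /face_sign -!intrM -intrD.
have ji : j != i by rewrite eq_sym.
have WU : Wi :|: Wj \subset [set i; j].
  rewrite subUset (subset_trans sWi) ?(subset_trans sWj) //;
  by rewrite sub1set !inE eqxx ?orbT.
case: Hinc => _ _ _ _ /(_ _ X _ i j (is_character_head b Ht) iX jX ij WU).
rewrite /= (setU_sub1I ij sWi sWj) setUC (setU_sub1I ji sWj sWi) setUC.
rewrite /fcell !chmul_chpowA (eadd_indU _ dji) (eadd_indU _ dij).
rewrite (setUC Wj Wi) (setD1C X j i).
by move=> ->; rewrite mul0r.
Qed.

Lemma dbasisK t b X a : is_character t -> vzero (lin dbasis (dbasis (pb_of t b X a))).
Proof.
move=> Ht y; pose T := dd_term t b X a y.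
have -> : coef (lin dbasis (dbasis (pb_of t b X a))) y =
  \sum_(i in X) \sum_(j in X :\ i) (T i set0 j set0 + T i set0 j [set j]
                                  + T i [set i] j set0 + T i [set i] j [set j]).
  rewrite coef_ddbasis; apply: eq_bigr => i iX.
  rewrite !coef_dbasis !mulr_sumr -big_split; apply: eq_bigr => j _.
  by rewrite /T /dd_term !mulrDr /= !addrA.
apply: sum_antisym_pairs => i j iX jX ij.
have anti Wi Wj : Wi \subset [set i] -> Wj \subset [set j] -> T i Wi j Wj = - T j Wj i Wi.
  exact: dd_term_antisym.
rewrite !anti ?sub0set ?subxx //.
by ring.
Qed.
Lemma mubasis_pb_of0 t b a : mubasis coord (pb_of t b set0 a) = [:: (1, (t, eadd a b))].
Proof. by rewrite /mubasis /pb_of pmulE //= chmul_chpow0. Qed.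

Lemma mu_dbasis t b X a : is_character t -> #|X| = 1%N ->
  vzero (lin (mubasis coord) (dbasis (pb_of t b X a))).
Proof.
move=> Ht /eqP/cards1P [i ->] y.
rewrite dbasis_pb_of enum_set1 /= coef_lin !big_cons big_nil addr0.
rewrite /pb_face setDv !mubasis_pb_of0 !coef_single.
have -> : eadd (eadd a (ind ([set i] :\: set0))) (eadd (ind set0) b) =
          eadd (eadd a (ind set0)) (eadd (ind [set i]) b).
  by apply/ffunP => l; rewrite !ffunE !inE; case: (l == i) => /=; lia.
rewrite -mulrDl /face_sign -intrD.
case: Hinc => _ _ eps0 eps_edge _.
have := eps_edge _ i (is_character_head b Ht).
by rewrite !eps0 /fcell ?setDv ?mulr1 ?is_character_head // => ->; rewrite mul0r.
Qed.

Lemma dmapK d w : vec_in (pb_ok coord d) w -> vzero (dmap (dmap w)).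
Proof.
move=> w_ok y; rewrite /dmap coef_lin_lin big1_seq // => c /andP [_ cw].
have [t [b [X [a [-> Ht _]]]]] := pb_okP (allP w_ok c cw).
by rewrite dbasisK // mulr0.
Qed.

Lemma mu_dmap w : vec_in (pb_ok coord 1) w -> vzero (mu coord (dmap w)).
Proof.
move=> w_ok y; rewrite /mu /dmap coef_lin_lin big1_seq // => c /andP [_ cw].
have [t [b [X [a [-> Ht HX]]]]] := pb_okP (allP w_ok c cw).
by rewrite mu_dbasis // mulr0.
Qed.

Lemma mu_inj_no_pivot v :
  (forall c, c \in v -> pb_with 0 no_pivot c.2) -> vzero (mu coord v) -> vzero v.
Proof.
move=> v_np mu0 y; have [yv|/coef_notin //] := boolP (y \in map snd v).
have [c cv ->] := mapP yv.
have [t [b [X [a [-> _ _ [-> ->]]]]]] := v_np c cv.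
rewrite -(mu0 (t, a)) /mu coef_lin coef_sumE; apply: eq_big_seq => c' c'v.
have [t' [b' [X' [a' [-> _ _ [-> ->]]]]]] := v_np c' c'v.
by rewrite mubasis_pb_of0 coef_single eadd0 pb_of_eq !eqxx /= xpair_eqE.
Qed.

Lemma mu_surjective (u : vec k (Defs.path k gT n)) : vec_in (@path_ok k gT n) u ->
  exists2 v, vec_in (pb_ok coord 0) v & veq (mu coord v) u.
Proof.
move=> u_ok; exists [seq (c.1, pb_of c.2.1 (ind set0) set0 c.2.2) | c <- u].
  rewrite /vec_in all_map; apply/allP => c cu /=.
  by apply: pb_ok_pb_of; [exact: (allP u_ok c cu) | rewrite cards0].
move=> y; rewrite /mu coef_lin big_map coef_sumE; apply: eq_bigr => c _.
by rewrite mubasis_pb_of0 coef_single eadd0; case: c => [? [? ?]].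
Qed.

Lemma mu_kernel v : vec_in (pb_ok coord 0) v ->
  vzero (mu coord v) <-> exists2 w, vec_in (pb_ok coord 1) w & veq (dmap w) v.
Proof.
move=> v_ok; split => [mu0|[w w_ok E] y]; last by rewrite /mu -(lin_veq _ E y) mu_dmap.
have [w [v' [w_ok v'_red E]]] := reduce_vec v_ok.
exists w => //; apply: (veq_catr E); apply: mu_inj_no_pivot.
  move=> c /v'_red; apply: pb_withW => b X /cards0_eq X0 [[j]|//].
  by rewrite X0 inE.
exact: vzero_lin_cat E (mu_dmap w_ok) mu0.
Qed.

Lemma dmap_kernel d (d_gt0 : (0 < d)%N) v : vec_in (pb_ok coord d) v ->
  vzero (dmap v) <-> exists2 w, vec_in (pb_ok coord d.+1) w & veq (dmap w) v.
Proof.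
move=> v_ok; split => [dv0|[w w_ok E] y]; last by rewrite -(lin_veq _ E y) (dmapK w_ok).
have [w [v' [w_ok v'_red E]]] := reduce_vec v_ok.
exists w => //; apply: (veq_catr E); apply: (@dmap_inj_pivot_in d).
  move=> c /v'_red; apply: pb_withW => b X HX [//|[X0 _]].
  by move: d_gt0; rewrite -HX X0 cards0.
exact: vzero_lin_cat E (dmapK w_ok) dv0.
Qed.

Lemma dmap_top_injective (n_gt0 : (0 < n)%N) v : vec_in (pb_ok coord n) v ->
  vzero (dmap v) -> vzero v.
Proof.
move=> v_ok; apply: (@dmap_inj_pivot_in n) => c cv.
have [t [b [X [a [-> Ht HX]]]]] := pb_okP (allP v_ok c cv).
have XT : X = setT by apply/eqP; rewrite eqEcard subsetT cardsT card_ord HX leqnn.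
by exists t, b, X, a; split => //; exists (Ordinal n_gt0) => [|l]; rewrite ?XT ?inE.
Qed.

Lemma dmap_radical d v : vec_in (pb_ok coord d) v ->
  forall y : pb, coef (dmap v) y != 0 -> (0 < plen y.1.2 + plen y.2)%N.
Proof.
move=> v_ok y /coef_neq0_mem /mem_lin [c cv].
have [t [b [X [a [-> _ _]]]]] := pb_okP (allP v_ok c cv).
move=> /mapP [c0 /mem_dbasis [i [W [iX sW ->]]] ->].
rewrite /plen /= -!/(esum _) !esumD !esum_ind.
by move: sW; rewrite subset1 => /orP [/eqP ->|/eqP ->]; rewrite ?setD0 cards1; lia.
Qed.

End Toric.

Local Close Scope ring_scope.

Theorem theorem4p10 (k : closedFieldType) (gT : finGroupType) (n : nat)
    (coord : 'I_n -> gT -> k) :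
  diag_SL_group coord ->
  (forall p, p \in [pchar k]%R -> ~~ (p %| #|gT|)) ->
  (forall i : 'I_n, rho coord i != ch1 k gT) ->
  forall eps : cell k gT n -> cell k gT n -> int,
    incidence coord eps -> minimal_resolution coord eps.
Proof.
move=> Hdiag _ _ eps Hinc; split.
- exact: mu_surjective.
- exact: mu_kernel.
- by move=> d /andP [d_gt0 _]; exact: dmap_kernel.
- exact: dmap_top_injective.
- by move=> d _; exact: dmap_radical.
Qed.
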